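(* Let $f,g\in\mathcal{S}(\Omega)$ be tame. Then \[V(f\cdot g)\subseteq V(N(f))\cup V(N(g)).\] If $A$ is nonsingular and, for each $x\in\Omega\setminus\mathbb{R}$, $f'_s(x)$ and $g'_s(x)$ belong to $C_A$, then \[V(f\cdot g)\subseteq\bigcup_{x\in V(f)\cup V(g)}\mathbb{S}_x.\]
   Context: Let $A$ be a finite-dimensional real algebra with unit $1$ ($\mathbb{R}$ identified with $\mathbb{R}1$) which is alternative (the associator $(x,y,z)=(xy)z-x(yz)$ is alternating), with a $^*$-involution $x\mapsto x^c$ (real linear, $(x^c)^c=x$, $(xy)^c=y^cx^c$, $r^c=r$ for $r\in\mathbb{R}$). Let $t(x)=x+x^c$, $n(x)=xx^c$; $A$ is nonsingular if $n(x)=0$ implies $x=0$. Center of $A$: $\{r:(r,a,b)=0,\ ra=ar\ \forall a,b\}$; $C_A=\{0\}\cup\{a:n(a),n(a^c)$ invertible elements of the center$\}$. $\mathbb{S}_A=\{J\in A:t(J)=0,n(J)=1\}$ (assumed non-empty), $Q_A=\mathbb{R}\cup\{x:t(x),n(x)\in\mathbb{R},4n(x)>t(x)^2\}$; every $x\in Q_A$ is $\alpha+\beta J$ with $\alpha,\beta\in\mathbb{R}$, $J\in\mathbb{S}_A$; $x^c=\alpha-\beta J$, $\mathrm{im}(x)=x-t(x)/2$, $\mathbb{S}_x=\{\alpha+\beta I:I\in\mathbb{S}_A\}$. Let $D\subseteq\mathbb{C}$ be non-empty, invariant under conjugation, $\Omega=\{\alpha+\beta J:\alpha+i\beta\in D,J\in\mathbb{S}_A\}$.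 $A_{\mathbb{C}}=\{a+\imath b\}$ with $(a+\imath b)(a'+\imath b')=aa'-bb'+\imath(ab'+ba')$, $\overline{a+\imath b}=a-\imath b$, $(a+\imath b)^c=a^c+\imath b^c$. A stem function $F=F_1+\imath F_2:D\to A_{\mathbb{C}}$ satisfies $F(\bar z)=\overline{F(z)}$ and induces $f=\mathcal{I}(F)$, $f(\alpha+\beta J)=F_1(\alpha+i\beta)+JF_2(\alpha+i\beta)$; $\mathcal{S}(\Omega)$ is the set of these. $f\cdot g=\mathcal{I}(FG)$, $f^c=\mathcal{I}(F^c)$ ($F^c(z)=F(z)^c$), $N(f)=f\cdot f^c$. $f$ is slice preserving if $F_1,F_2$ are real valued; tame if $N(f)$ is slice preserving and $N(f)=N(f^c)$. $V(h)=\{x:h(x)=0\}$. $f'_s(x)=\frac12\mathrm{im}(x)^{-1}(f(x)-f(x^c))$ for $x\in\Omega\setminus\mathbb{R}$. *)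

From HB Require Import structures.
From mathcomp Require Import all_boot all_order all_algebra.
From mathcomp Require Import boolp classical_sets reals.
Set Implicit Arguments. Unset Strict Implicit. Unset Printing Implicit Defensive.
Import Order.TTheory GRing.Theory Num.Theory.
Local Open Scope ring_scope.
Local Open Scope classical_set_scope.

Record altStarAlg (R : realType) (V : vectType R) := AltStarAlg {
  amul : V -> V -> V;
  aone : V;
  aconj : V -> V;
  amulDl : forall x y z, amul (x + y) z = amul x z + amul y z;
  amulDr : forall x y z, amul x (y + z) = amul x y + amul x z;
  amulZl : forall (r : R) x y, amul (r *: x) y = r *: amul x y;
  amulZr : forall (r : R) x y, amul x (r *: y) = r *: amul x y;
  amul1l : forall x, amul aone x = x;
  amul1r : forall x, amul x aone = x;
  aone_neq0 : aone != 0;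
  alt_xxy : forall x y, amul (amul x x) y - amul x (amul x y) = 0;
  alt_xyx : forall x y, amul (amul x y) x - amul x (amul y x) = 0;
  alt_yxx : forall x y, amul (amul y x) x - amul y (amul x x) = 0;
  aconjD : forall x y, aconj (x + y) = aconj x + aconj y;
  aconjZ : forall (r : R) x, aconj (r *: x) = r *: aconj x;
  aconjK : forall x, aconj (aconj x) = x;
  aconjM : forall x y, aconj (amul x y) = amul (aconj y) (aconj x);
  aconj_real : forall r : R, aconj (r *: aone) = r *: aone
}.

Section Defs.
Variables (R : realType) (V : vectType R) (A : altStarAlg V).

Local Notation mul := (amul A).
Local Notation one := (aone A).
Local Notation cj := (aconj A).

Definition rl (r : R) : V := r *: one.
Definition is_real (x : V) : Prop := exists r : R, x = rl r.

Definition tr (x : V) : V := x + cj x.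
Definition nrm (x : V) : V := mul x (cj x).
Definition assoc (x y z : V) : V := mul (mul x y) z - mul x (mul y z).

Definition nonsingular : Prop := forall x, nrm x = 0 -> x = 0.

Definition central (r : V) : Prop :=
  forall a b, assoc r a b = 0 /\ mul r a = mul a r.
Definition invertible (r : V) : Prop :=
  exists s, mul r s = one /\ mul s r = one.
Definition invertible_central (r : V) : Prop := central r /\ invertible r.

Definition C_A (a : V) : Prop :=
  a = 0 \/ (invertible_central (nrm a) /\ invertible_central (nrm (cj a))).

Definition sphere (J : V) : Prop := tr J = 0 /\ nrm J = one.

(* the domain D ⊆ C is represented as a predicate on pairs (alpha, beta)
   standing for alpha + i beta *)
Definition inOmega (D : R -> R -> Prop) (x : V) : Prop :=
  exists a b J, D a b /\ sphere J /\ x = rl a + b *: J.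

(* stem functions F = F1 + i F2 : D -> A_C, with A_C = A x A *)
Definition stem := ((R -> R -> V) * (R -> R -> V))%type.

Definition is_stem (D : R -> R -> Prop) (F : stem) : Prop :=
  forall a b, D a b -> F.1 a (- b) = F.1 a b /\ F.2 a (- b) = - F.2 a b.

(* product in A_C: (a + ib)(a' + ib') = aa' - bb' + i(ab' + ba') *)
Definition stem_mul (F G : stem) : stem :=
  (fun a b => mul (F.1 a b) (G.1 a b) - mul (F.2 a b) (G.2 a b),
   fun a b => mul (F.1 a b) (G.2 a b) + mul (F.2 a b) (G.1 a b)).

Definition stem_conj (F : stem) : stem :=
  (fun a b => cj (F.1 a b), fun a b => cj (F.2 a b)).

(* the induced slice function I(F): f(alpha + beta J) = F1(alpha,beta) + J F2(alpha,beta);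
   a representation of x is chosen (the value does not depend on it). *)
Definition slice_fun (D : R -> R -> Prop) (F : stem) (x : V) : V :=
  let p := xget ((0 : R), (0 : R), (0 : V))
    [set p : R * R * V | D p.1.1 p.1.2 /\ sphere p.2 /\ x = rl p.1.1 + p.1.2 *: p.2] in
  F.1 p.1.1 p.1.2 + mul p.2 (F.2 p.1.1 p.1.2).

Definition zeroset (D : R -> R -> Prop) (F : stem) (x : V) : Prop :=
  inOmega D x /\ slice_fun D F x = 0.

Definition slice_preserving (D : R -> R -> Prop) (F : stem) : Prop :=
  forall a b, D a b -> is_real (F.1 a b) /\ is_real (F.2 a b).

Definition Nstem (F : stem) : stem := stem_mul F (stem_conj F).

Definition tame (D : R -> R -> Prop) (F : stem) : Prop :=
  slice_preserving D (Nstem F) /\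
  forall x, inOmega D x ->
    slice_fun D (Nstem F) x = slice_fun D (Nstem (stem_conj F)) x.

Definition imx (x : V) : V := x - (2%:R)^-1 *: tr x.

Definition ainv (x : V) : V :=
  xget (0 : V) [set y : V | mul x y = one /\ mul y x = one].

Definition sderiv (D : R -> R -> Prop) (F : stem) (x : V) : V :=
  (2%:R)^-1 *: mul (ainv (imx x)) (slice_fun D F x - slice_fun D F (cj x)).

Definition in_sph (y z : V) : Prop :=
  exists a b J I, sphere J /\ sphere I /\ y = rl a + b *: J /\ z = rl a + b *: I.

End Defs.

(* Fix x = a + bJ and let X = F(a + ib), Y = G(a + ib) in the complexified
   algebra A_C, which is again alternative.  Tameness makes X X^c = X^c X the
   complex scalar N(f)(a + ib); when it is nonzero, X is a two-sided unit of
   A_C.  Now (f.g)(x) = 0 says that the nonzero element 1 - iJ annihilates XY,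
   which is impossible when X and Y are both units; so N(f) or N(g) vanishes
   at x.  If N(f) does, and f'_s(x) = b^-1 F_2 lies in C_A, then with
   c = F_2 F_2^c central and invertible, I = - F_1 c^-1 F_2^c is an imaginary
   unit with F_1 + I F_2 = 0, i.e. f vanishes at a + bI, a point of S_x. *)

From HB Require Import structures.
From mathcomp Require Import all_boot all_order all_algebra.
From mathcomp Require Import boolp classical_sets reals.
From mathcomp Require Import ring lra.
Set Implicit Arguments. Unset Strict Implicit. Unset Printing Implicit Defensive.
Import GRing.Theory Num.Theory.
Local Open Scope ring_scope.

(* The trivial extension int ⋉ M (M a square-zero ideal) is a commutative
   ring containing M additively, so [ring] decides int-linear identities in M. *)
Section TrivialExtension.
Variable M : zmodType.

Definition zext := (int * M)%type.
HB.instance Definition _ := GRing.Zmodule.on zext.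

Definition zext_mul (x y : zext) : zext := (x.1 * y.1, x.2 *~ y.1 + y.2 *~ x.1).

Lemma zext_mulA : associative zext_mul.
Proof.
move=> [a m] [b n] [c o]; rewrite /zext_mul /=; congr pair; first by rewrite mulrA.
by rewrite !mulrzDl -!mulrzA addrA [c * a]mulrC [b * a]mulrC.
Qed.

Lemma zext_mulC : commutative zext_mul.
Proof. by move=> [a m] [b n]; rewrite /zext_mul /= mulrC addrC. Qed.

Lemma zext_mul1 : left_id (1, 0) zext_mul.
Proof. by move=> [a m]; rewrite /zext_mul /= mul1r mul0rz add0r mulr1z. Qed.

Lemma zext_mulDl : left_distributive zext_mul +%R.
Proof.
move=> [a m] [b n] [c o]; rewrite /zext_mul /=; congr pair; first by rewrite mulrDl.
by rewrite mulrzDl mulrzDr addrACA.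
Qed.

Lemma zext_one_neq0 : (1, 0) != 0 :> zext. Proof. by []. Qed.

HB.instance Definition _ := GRing.Zmodule_isComNzRing.Build zext
  zext_mulA zext_mulC zext_mul1 zext_mulDl zext_one_neq0.

Definition zext_inj (m : M) : zext := (0, m).

Lemma zext_inj_is_zmod_morphism : zmod_morphism zext_inj.
Proof. by move=> x y; rewrite /zext_inj /=; congr pair; rewrite subr0. Qed.

HB.instance Definition _ :=
  GRing.isZmodMorphism.Build M zext zext_inj zext_inj_is_zmod_morphism.

Lemma zext_inj_inj : injective zext_inj. Proof. by move=> x y []. Qed.

Lemma zext_lincomb (l r : M) : l = r ->
  forall c L R : zext, L - c * (zext_inj l - zext_inj r) = R -> L = R.
Proof. by move=> -> c L R <-; rewrite subrr mulr0 subr0. Qed.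

End TrivialExtension.

Ltac zmod_ring := apply: zext_inj_inj; ring.
Tactic Notation "lincomb" uconstr(c) uconstr(h) := refine (zext_lincomb h (c := c) _).

Lemma mulrn_inj (R : numFieldType) (M : lmodType R) (n : nat) (x y : M) :
  (0 < n)%N -> (x - y) *+ n = 0 -> x = y.
Proof.
move=> n_gt0 /eqP; rewrite -scaler_nat scaler_eq0 pnatr_eq0 subr_eq0.
by rewrite eqn0Ngt n_gt0 => /eqP.
Qed.

Record alternative (M : zmodType) (op : M -> M -> M) (one : M) := Alternative {
  alt_mulDl : left_distributive op +%R;
  alt_mulDr : right_distributive op +%R;
  alt_mul1l : left_id one op;
  alt_mul1r : right_id one op;
  alt_left : forall x y, op (op x x) y = op x (op x y);
  alt_flexible : forall x y, op (op x y) x = op x (op y x);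
  alt_right : forall x y, op (op y x) x = op y (op x x) }.

Lemma alternative_opposite (M : zmodType) (op : M -> M -> M) (one : M) :
  alternative op one -> alternative (fun x y => op y x) one.
Proof.
case=> mulDl mulDr mul1l mul1r left flex right.
by split=> // [x y z|x y z|x y|x y|x y]; rewrite ?mulDl ?mulDr ?right ?flex ?left.
Qed.

Section Alternative.
Variables (R : numFieldType) (M : lmodType R) (op : M -> M -> M) (one : M).
Hypothesis altM : alternative op one.

Let mulDl := alt_mulDl altM.
Let mulDr := alt_mulDr altM.
Let mul1l := alt_mul1l altM.
Let mul1r := alt_mul1r altM.

Lemma alt_mul0l x : op 0 x = 0.
Proof. by apply/(addrI (op 0 x)); rewrite -mulDl !addr0. Qed.

Lemma alt_mul0r x : op x 0 = 0.
Proof. by apply/(addrI (op x 0)); rewrite -mulDr !addr0. Qed.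

Lemma alt_mulNl x y : op (- x) y = - op x y.
Proof. by apply/(addrI (op x y)); rewrite -mulDl !subrr alt_mul0l. Qed.

Lemma alt_mulNr x y : op x (- y) = - op x y.
Proof. by apply/(addrI (op x y)); rewrite -mulDr !subrr alt_mul0r. Qed.

Lemma alt_mulMnl x y n : op (x *+ n) y = op x y *+ n.
Proof. by elim: n => [|n IH]; rewrite ?mulr0n ?alt_mul0l // !mulrS mulDl IH. Qed.

Lemma alt_mulMnr x y n : op x (y *+ n) = op x y *+ n.
Proof. by elim: n => [|n IH]; rewrite ?mulr0n ?alt_mul0r // !mulrS mulDr IH. Qed.

Definition associator x y z := op (op x y) z - op x (op y z).

Ltac expand := rewrite /associator
  ?(mulDl, mulDr, alt_mulNl, alt_mulNr, alt_mul0l, alt_mul0r, alt_mulMnl, alt_mulMnr).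

(* Linearizations of the left and right alternative laws. *)
Lemma associator_swap12 u v w : associator u v w + associator v u w = 0.
Proof.
apply: zext_inj_inj.
lincomb 1 (alt_left altM (u + v) w).
lincomb (-1) (alt_left altM u w).
lincomb (-1) (alt_left altM v w).
by expand; ring.
Qed.

Lemma associator_swap23 u v w : associator u v w + associator u w v = 0.
Proof.
apply: zext_inj_inj.
lincomb 1 (alt_right altM (v + w) u).
lincomb (-1) (alt_right altM v u).
lincomb (-1) (alt_right altM w u).
by expand; ring.
Qed.

(* Both Moufang identities are explicit linear combinations, after scaling
   by 6, of instances of associator_swap12 and associator_swap23. *)
Lemma moufang_left x y z : op (op (op x y) x) z = op x (op y (op x z)).
Proof.
apply: (@mulrn_inj R M 6) => //; apply: zext_inj_inj.
lincomb 4%:R (associator_swap12 (op y x) z x).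
lincomb (-4%:R) (associator_swap23 (op y x) z x).
lincomb 2%:R (associator_swap12 (op x y) x z).
lincomb 4%:R (associator_swap12 (op y x) x z).
lincomb (-2%:R) (associator_swap23 z (op y x) x).
lincomb 2%:R (associator_swap12 z (op x x) y).
lincomb (-2%:R) (associator_swap23 z (op x x) y).
lincomb 2%:R (associator_swap12 z x (op y x)).
lincomb (-2%:R) (associator_swap23 (op x x) z y).
lincomb 2%:R (associator_swap12 (op x z) y x).
lincomb 2%:R (associator_swap12 (op y z) x x).
lincomb (-1%:R) (associator_swap23 (op y z) x x).
lincomb (-2%:R) (associator_swap12 (op z y) x x).
lincomb (-2%:R) (associator_swap23 y (op x z) x).
lincomb 2%:R (associator_swap12 y x (op x z)).
lincomb (-2%:R) (associator_swap23 x (op y z) x).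
lincomb 4%:R (congr1 (op^~ z) (associator_swap12 y x x)).
lincomb 1%:R (congr1 (op z) (associator_swap23 y x x)).
lincomb (-2%:R) (congr1 (op^~ z) (associator_swap23 y x x)).
lincomb 1%:R (congr1 (op^~ z) (associator_swap12 x x y)).
lincomb (-2%:R) (congr1 (op^~ x) (associator_swap12 z x y)).
lincomb 2%:R (congr1 (op^~ x) (associator_swap23 z x y)).
lincomb (-2%:R) (congr1 (op x) (associator_swap12 z y x)).
lincomb 2%:R (congr1 (op x) (associator_swap23 y z x)).
lincomb 2%:R (congr1 (op x) (associator_swap12 y x z)).
by expand; ring.
Qed.

Lemma moufang_middle x y z : op (op x y) (op z x) = op x (op (op y z) x).
Proof.
apply: (@mulrn_inj R M 6) => //; apply: zext_inj_inj.
lincomb (-6%:R) (associator_swap12 (op x y) z x).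
lincomb 6%:R (associator_swap23 (op x y) z x).
lincomb (-4%:R) (associator_swap12 (op y x) z x).
lincomb 4%:R (associator_swap23 (op y x) z x).
lincomb (-2%:R) (associator_swap12 (op x y) x z).
lincomb (-4%:R) (associator_swap12 (op y x) x z).
lincomb 2%:R (associator_swap23 z (op y x) x).
lincomb (-2%:R) (associator_swap12 z (op x x) y).
lincomb 2%:R (associator_swap23 z (op x x) y).
lincomb 4%:R (associator_swap12 z x (op y x)).
lincomb 2%:R (associator_swap23 (op x x) z y).
lincomb 4%:R (associator_swap12 (op x z) y x).
lincomb 6%:R (associator_swap12 (op z x) y x).
lincomb (-2%:R) (associator_swap12 (op y z) x x).
lincomb 1%:R (associator_swap23 (op y z) x x).
lincomb (-4%:R) (associator_swap12 (op z y) x x).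
lincomb 3%:R (associator_swap23 (op z y) x x).
lincomb (-4%:R) (associator_swap23 y (op x z) x).
lincomb (-6%:R) (associator_swap23 y (op z x) x).
lincomb 4%:R (associator_swap12 y x (op x z)).
lincomb 6%:R (associator_swap12 y x (op z x)).
lincomb 2%:R (associator_swap23 x (op y z) x).
lincomb (-6%:R) (congr1 (op z) (associator_swap12 y x x)).
lincomb (-4%:R) (congr1 (op^~ z) (associator_swap12 y x x)).
lincomb 2%:R (congr1 (op z) (associator_swap23 y x x)).
lincomb 2%:R (congr1 (op^~ z) (associator_swap23 y x x)).
lincomb (-1%:R) (congr1 (op^~ z) (associator_swap12 x x y)).
lincomb (-4%:R) (congr1 (op^~ x) (associator_swap12 z x y)).
lincomb (-2%:R) (congr1 (op^~ x) (associator_swap23 z x y)).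
lincomb (-4%:R) (congr1 (op x) (associator_swap12 z y x)).
lincomb (-2%:R) (congr1 (op x) (associator_swap23 y z x)).
lincomb (-2%:R) (congr1 (op x) (associator_swap12 y x z)).
by expand; ring.
Qed.

(* The two-sided inverse u of x also cancels x on the left: the Moufang
   identity makes L_x L_u L_x = L_x, while associator_swap12 gives
   L_u L_x + L_x L_u = 2. *)
Lemma alt_invKl x u : op x u = one -> op u x = one -> forall y, op u (op x y) = y.
Proof.
move=> xu ux y.
have sum2 z : op u (op x z) + op x (op u z) = z *+ 2.
  have := associator_swap12 x u z; rewrite /associator xu ux !mul1l => h.
  by apply: zext_inj_inj; lincomb (-1) h; ring.
have LxLuLx z : op x (op u (op x z)) = op x z by rewrite -moufang_left xu mul1l.
have LuLxLu z : op u (op x (op u z)) = op u z by rewrite -moufang_left ux mul1l.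
set T := op u (op x y).
have fixT : op x (op u T) = T.
  have := sum2 T; rewrite {1}/T LxLuLx => h.
  by apply: zext_inj_inj; lincomb 1 h; ring.
have defT : T = y *+ 2 - op x (op u y) by rewrite -(sum2 y) addrK.
have LxLuT : op x (op u T) = op x (op u y).
  rewrite defT ?(mulDr, alt_mulNr, alt_mulMnr) LuLxLu; zmod_ring.
have eqT : T = op x (op u y) by rewrite -fixT LxLuT.
have := sum2 y; rewrite -/T -eqT => h.
by apply: (@mulrn_inj R M 2) => //; rewrite mulrnBl mulr2n h subrr.
Qed.

End Alternative.

Section AlternativeUnits.
Variables (R : numFieldType) (M : lmodType R) (op : M -> M -> M) (one : M).
Hypothesis altM : alternative op one.

Let invKl := alt_invKl altM.
Let mul0l := alt_mul0l altM.
Let mul0r := alt_mul0r altM.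

Lemma alt_invKr x u : op x u = one -> op u x = one -> forall y, op (op y x) u = y.
Proof. by move=> xu ux y; apply: (alt_invKl (alternative_opposite altM) ux xu). Qed.

Lemma alt_mul_units_eq0 x u y v w : op x u = one -> op u x = one ->
  op y v = one -> op v y = one -> op w (op x y) = 0 -> w = 0.
Proof.
move=> xu ux yv vy wxy0.
have vw_y : op y (op v w) = w by apply: invKl.
have := moufang_middle altM y (op v w) x; rewrite vw_y wxy0 => h.
have vwx_y : op (op (op v w) x) y = 0.
  by rewrite -(invKl yv vy (op (op (op v w) x) y)) -h mul0r.
have vwx : op (op v w) x = 0 by rewrite -(alt_invKr yv vy (op (op v w) x)) vwx_y mul0l.
have vw : op v w = 0 by rewrite -(alt_invKr xu ux (op v w)) vwx mul0l.
by rewrite -vw_y vw mul0r.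
Qed.

Lemma alt_mul_units_inv x u y v : op x u = one -> op u x = one ->
  op y v = one -> op v y = one -> op (op x y) (op v u) = one.
Proof.
move=> xu ux yv vy.
have := moufang_middle altM (op x y) v u.
rewrite (alt_invKr yv vy) (invKl xu ux) -(alt_flexible altM) => h.
apply/eqP; rewrite -subr_eq0; apply/eqP.
apply: (alt_mul_units_eq0 xu ux yv vy).
by rewrite (alt_mulDl altM) (alt_mulNl altM) -h (alt_mul1l altM) subrr.
Qed.

End AlternativeUnits.

Section SliceFunctions.
Variables (R : realType) (V : vectType R) (A : altStarAlg V).
Local Notation mul := (amul A).
Local Notation one := (aone A).
Local Notation cj := (aconj A).
Local Notation rl := (rl A).

Lemma alternative_amul : alternative mul one.
Proof.
have eq_of_subr0 (x y : V) : x - y = 0 -> x = y by move/eqP; rewrite subr_eq0 => /eqP.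
split; [exact: amulDl|exact: amulDr|exact: amul1l|exact: amul1r|..] => x y;
  apply: eq_of_subr0; [exact: alt_xxy|exact: alt_xyx|exact: alt_yxx].
Qed.

Let altA := alternative_amul.
Let amul0l := alt_mul0l altA.
Let amul0r := alt_mul0r altA.
Let amulNl := alt_mulNl altA.
Let amulNr := alt_mulNr altA.
Let amulMnl := alt_mulMnl altA.
Let amulMnr := alt_mulMnr altA.
Let swap12 := associator_swap12 altA.
Let swap23 := associator_swap23 altA.

Ltac expand := rewrite /associator
  ?((amulDl A), (amulDr A), amulNl, amulNr, amul0l, amul0r, amulMnl, amulMnr).

Lemma aconjN x : cj (- x) = - cj x.
Proof. by rewrite -scaleN1r aconjZ scaleN1r. Qed.

Lemma aconj1 : cj one = one.
Proof. by rewrite -[one]scale1r aconj_real. Qed.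

Lemma rlD r s : rl (r + s) = rl r + rl s.
Proof. by rewrite /rl scalerDl. Qed.

Lemma rl0 : rl 0 = 0.
Proof. by rewrite /rl scale0r. Qed.

Lemma rl1 : rl 1 = one.
Proof. by rewrite /rl scale1r. Qed.

Lemma rl_inj : injective rl.
Proof.
move=> r s /eqP; rewrite -subr_eq0 -scalerBl scaler_eq0 (negbTE (aone_neq0 A)) orbF.
by rewrite subr_eq0 => /eqP.
Qed.

(** * Imaginary units *)

Section Sphere.
Variable J : V.
Hypothesis sJ : sphere A J.

Lemma sphere_conj : cj J = - J.
Proof. by apply/eqP; rewrite -addr_eq0 addrC; apply/eqP; case: sJ. Qed.

Lemma sphere_sqr : mul J J = - one.
Proof. by case: sJ => _; rewrite /nrm sphere_conj amulNr => <-; rewrite opprK. Qed.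

Lemma sphereN : sphere A (- J).
Proof.
split; first by rewrite /tr aconjN sphere_conj opprK addrC subrr.
by rewrite /nrm aconjN sphere_conj opprK amulNl sphere_sqr opprK.
Qed.

Lemma sphere_mulK x : mul J (mul J x) = - x.
Proof. by rewrite -(alt_left altA) sphere_sqr amulNl (amul1l A). Qed.

Lemma sphere_mul_eq0 x : mul J x = 0 -> x = 0.
Proof. by move=> Jx0; rewrite -[x]opprK -(sphere_mulK x) Jx0 amul0r oppr0. Qed.

Lemma tr_slice_pt a b : tr A (rl a + b *: J) = rl (a + a).
Proof.
rewrite /tr aconjD aconj_real aconjZ sphere_conj rlD.
by rewrite scalerN addrACA subrr addr0.
Qed.

Lemma nrmZ_sphere b : nrm A (b *: J) = rl (b * b).
Proof. by case: sJ => _; rewrite /nrm aconjZ amulZl amulZr scalerA => ->. Qed.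

End Sphere.

Lemma slice_pt_unique a b J a' b' J' : sphere A J -> sphere A J' ->
  rl a + b *: J = rl a' + b' *: J' ->
  a' = a /\ ((b' = b /\ J' = J) \/ (b' = - b /\ J' = - J) \/ (b = 0 /\ b' = 0)).
Proof.
move=> sJ sJ' e.
have ea : a' = a.
  by have := congr1 (tr A) e; rewrite !tr_slice_pt // => /rl_inj; lra.
split => //; subst a'.
have e2 : b *: J = b' *: J' by move: e => /addrI.
have eb : b' * b' = b * b by apply: rl_inj; rewrite -(nrmZ_sphere sJ b) -(nrmZ_sphere sJ' b') e2.
have [b0|bn0] := eqVneq b 0.
  by subst b; right; right; split => //; move/eqP: eb; rewrite mulr0 mulf_eq0 orbb => /eqP.
have : (b' - b) * (b' + b) = 0 by rewrite mulrBl !mulrDr eb; ring.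
move/eqP; rewrite mulf_eq0 => /orP [|]; rewrite ?subr_eq0 ?addr_eq0 => /eqP eb'; subst b'.
- by left; split => //; apply: (scalerI bn0).
- right; left; split => //; apply: (scalerI bn0).
  by rewrite scalerN e2 scaleNr opprK.
Qed.

Lemma slice_pt_real a b J : sphere A J -> is_real A (rl a + b *: J) -> b = 0.
Proof.
move=> sJ [r e]; have e' : rl a + b *: J = rl r + 0 *: J by rewrite scale0r addr0.
by have [_ [[]|[[/eqP]|[]]]] := slice_pt_unique sJ sJ e'; rewrite // eq_sym oppr_eq0 => /eqP.
Qed.

(** * Stem functions *)

Section Stem.
Variable D : R -> R -> Prop.

Lemma stem_snd0 (F : stem V) a : is_stem D F -> D a 0 -> F.2 a 0 = 0.
Proof.
move=> sF Da0; have := (sF a 0 Da0).2; rewrite oppr0 => /eqP.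
rewrite -addr_eq0 -mulr2n => /eqP F20; apply: (@mulrn_inj R V 2) => //.
by rewrite subr0.
Qed.

Lemma slice_fun_pt (F : stem V) a b J : is_stem D F -> D a b -> sphere A J ->
  slice_fun A D F (rl a + b *: J) = F.1 a b + mul J (F.2 a b).
Proof.
move=> sF Dab sJ; rewrite /slice_fun.
set P := (X in xget _ X).
have : P (xget (0, 0, 0) P) by apply: (@xgetI _ _ P (a, b, J)).
case: (xget _ P) => [[a' b'] J'] [_ [/= sJ' /= e]] /=.
have [-> [[-> ->]|[[-> ->]|[b0 b'0]]]] := slice_pt_unique sJ sJ' e.
- by [].
- by have [-> ->] := sF a b Dab; rewrite amulNl amulNr opprK.
- by subst b b'; rewrite (stem_snd0 sF Dab) !amul0r.
Qed.

Lemma is_stem_mul (F G : stem V) : is_stem D F -> is_stem D G -> is_stem D (stem_mul A F G).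
Proof.
move=> sF sG a b Dab /=; have [-> ->] := sF a b Dab; have [-> ->] := sG a b Dab.
by rewrite /= !amulNl !amulNr opprK -opprD.
Qed.

Lemma is_stem_conj (F : stem V) : is_stem D F -> is_stem D (stem_conj A F).
Proof. by move=> sF a b Dab /=; have [-> ->] := sF a b Dab; rewrite aconjN. Qed.

Lemma is_stem_N (F : stem V) : is_stem D F -> is_stem D (Nstem A F).
Proof. by move=> sF; apply: is_stem_mul => //; apply: is_stem_conj. Qed.

End Stem.

(** * The complexified algebra *)

Definition cmul (X Y : V * V) : V * V :=
  (mul X.1 Y.1 - mul X.2 Y.2, mul X.1 Y.2 + mul X.2 Y.1).
Definition cone : V * V := (one, 0).
Definition cconj (X : V * V) : V * V := (cj X.1, cj X.2).
Definition cscale (k1 k2 : R) (X : V * V) : V * V :=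
  (k1 *: X.1 - k2 *: X.2, k1 *: X.2 + k2 *: X.1).

Lemma alternative_cmul : alternative cmul cone.
Proof.
split.
- by move=> [x1 x2] [y1 y2] [z1 z2]; congr pair => /=; apply: zext_inj_inj; expand; ring.
- by move=> [x1 x2] [y1 y2] [z1 z2]; congr pair => /=; apply: zext_inj_inj; expand; ring.
- by move=> [x1 x2]; rewrite /cmul /= !(amul1l A) !amul0l subr0 addr0.
- by move=> [x1 x2]; rewrite /cmul /= !(amul1r A) !amul0r subr0 add0r.
- move=> [x1 x2] [y1 y2]; rewrite /cmul /=; congr pair; apply: (@mulrn_inj R V 2) => //; apply: zext_inj_inj.
  + lincomb 1 (swap12 x1 x1 y1).
    lincomb (-2%:R) (swap12 x2 x1 y2).
    lincomb (-1) (swap12 x2 x2 y1).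
    by expand; ring.
  + lincomb 2%:R (swap12 x2 x1 y1).
    lincomb (-1) (swap12 x2 x2 y2).
    lincomb 1 (swap12 x1 x1 y2).
    by expand; ring.
- move=> [x1 x2] [y1 y2]; rewrite /cmul /=; congr pair; apply: (@mulrn_inj R V 2) => //; apply: zext_inj_inj.
  + lincomb 2%:R (swap12 y1 x1 x1).
    lincomb (-1) (swap23 y1 x1 x1).
    lincomb (-2%:R) (swap12 x2 y2 x1).
    lincomb 2%:R (swap23 y2 x2 x1).
    lincomb (-2%:R) (swap12 y2 x1 x2).
    lincomb 1 (swap12 x2 x2 y1).
    lincomb (-2%:R) (swap23 x2 x2 y1).
    by expand; ring.
  + lincomb 2%:R (swap12 x2 y1 x1).
    lincomb (-2%:R) (swap23 y1 x2 x1).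
    lincomb 2%:R (swap12 y1 x1 x2).
    lincomb 1 (swap12 x2 x2 y2).
    lincomb (-2%:R) (swap23 x2 x2 y2).
    lincomb 2%:R (swap12 y2 x1 x1).
    lincomb (-1) (swap23 y2 x1 x1).
    by expand; ring.
- move=> [x1 x2] [y1 y2]; rewrite /cmul /=; congr pair; apply: (@mulrn_inj R V 2) => //; apply: zext_inj_inj.
  + lincomb 1 (swap23 y1 x1 x1).
    lincomb (-2%:R) (swap23 y2 x2 x1).
    lincomb (-1) (swap12 x2 x2 y1).
    lincomb 2%:R (swap23 x2 x2 y1).
    lincomb (-2%:R) (swap12 x2 y1 x2).
    by expand; ring.
  + lincomb 2%:R (swap23 y1 x2 x1).
    lincomb (-1) (swap12 x2 x2 y2).
    lincomb 2%:R (swap23 x2 x2 y2).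
    lincomb (-2%:R) (swap12 x2 y2 x2).
    lincomb 1 (swap23 y2 x1 x1).
    by expand; ring.
Qed.

Lemma cmul_cscaler k1 k2 X Y : cmul X (cscale k1 k2 Y) = cscale k1 k2 (cmul X Y).
Proof.
case: X Y => [x1 x2] [y1 y2]; rewrite /cmul /cscale /=; congr pair;
  rewrite ?((amulDr A), amulNr, amulZr, scalerDr, scalerN, scalerBr); zmod_ring.
Qed.

Lemma cmul_cscalel k1 k2 X Y : cmul (cscale k1 k2 X) Y = cscale k1 k2 (cmul X Y).
Proof.
case: X Y => [x1 x2] [y1 y2]; rewrite /cmul /cscale /=; congr pair;
  rewrite ?((amulDl A), amulNl, amulZl, scalerDr, scalerN, scalerBr); zmod_ring.
Qed.

Lemma cscale_rl k1 k2 n1 n2 :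
  cscale k1 k2 (rl n1, rl n2) = (rl (k1 * n1 - k2 * n2), rl (k1 * n2 + k2 * n1)).
Proof. by rewrite /cscale /rl /= !scalerA scalerBl scalerDl. Qed.

(* A_C is modelled as V * V, so stem_at F a b is the value F(a + ib). *)
Definition stem_at (F : stem V) (a b : R) : V * V := (F.1 a b, F.2 a b).

Definition cnorm_eq (X : V * V) (n1 n2 : R) : Prop :=
  cmul X (cconj X) = (rl n1, rl n2) /\ cmul (cconj X) X = (rl n1, rl n2).

Lemma cnorm_unit X n1 n2 : ~ (n1 = 0 /\ n2 = 0) -> cnorm_eq X n1 n2 ->
  exists U, cmul X U = cone /\ cmul U X = cone.
Proof.
move=> n_neq0 [XXc XcX]; set d := n1 * n1 + n2 * n2.
have d_neq0 : d != 0 by apply/eqP => d0; apply: n_neq0; rewrite /d in d0; split; nra.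
exists (cscale (n1 / d) (- n2 / d) (cconj X)).
have re1 : n1 / d * n1 - - n2 / d * n2 = 1 by rewrite /d; field.
have im0 : n1 / d * n2 + - n2 / d * n1 = 0 by rewrite /d; field.
by rewrite cmul_cscaler cmul_cscalel XXc XcX cscale_rl re1 im0 rl1 rl0.
Qed.

(* In the complexified algebra, P.1 + J P.2 = 0 says that the nonzero
   element (one, - J) annihilates P, so P is not a product of units. *)
Lemma cnorm0_of_mul_slice0 J X Y n1 n2 m1 m2 : sphere A J ->
  cnorm_eq X n1 n2 -> cnorm_eq Y m1 m2 -> (cmul X Y).1 + mul J (cmul X Y).2 = 0 ->
  (n1 = 0 /\ n2 = 0) \/ (m1 = 0 /\ m2 = 0).
Proof.
move=> sJ nX nY XY0.
case: (pselect (n1 = 0 /\ n2 = 0)) => [|n_neq0]; first by left.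
case: (pselect (m1 = 0 /\ m2 = 0)) => [|m_neq0]; first by right.
have [U [XU UX]] := cnorm_unit n_neq0 nX.
have [W [YW WY]] := cnorm_unit m_neq0 nY.
have annihilate : cmul (one, - J) (cmul X Y) = 0.
  move: XY0; case: (cmul X Y) => p1 p2 /= p0.
  have -> : p1 = - mul J p2 by apply/eqP; rewrite -addr_eq0 p0.
  by rewrite /cmul /= !(amul1l A) !amulNl !amulNr !opprK sphere_mulK // addNr subrr.
have := alt_mul_units_eq0 alternative_cmul XU UX YW WY annihilate.
by case=> /eqP; rewrite (negbTE (aone_neq0 A)).
Qed.

(** * Central elements *)

Section Central.
Variable k : V.
Hypothesis ck : central A k.

Lemma central_mulC a : mul k a = mul a k.
Proof. by have [] := ck a a. Qed.

Lemma central_mulAl a b : mul (mul k a) b = mul k (mul a b).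
Proof. by apply/eqP; rewrite -subr_eq0; have [/eqP] := ck a b. Qed.

Lemma central_mulAm a b : mul (mul a k) b = mul a (mul k b).
Proof.
apply/eqP; rewrite -subr_eq0; have := swap12 a k b.
by have [kab _] := ck a b; rewrite /associator -/(assoc A k a b) kab addr0 => ->.
Qed.

Lemma central_mulAr a b : mul (mul a b) k = mul a (mul b k).
Proof.
apply/eqP; rewrite -subr_eq0; apply/eqP; have := swap23 a b k.
by rewrite {2}/associator central_mulAm subrr addr0.
Qed.

Lemma central_mulCA a x : mul a (mul k x) = mul k (mul a x).
Proof. by rewrite (central_mulC x) -central_mulAr central_mulC. Qed.

Lemma central_invKl s w : mul s k = one -> mul s (mul k w) = w.
Proof.
move=> sk; have [ksw _] := ck s w; have := swap12 s k w.
rewrite /associator -/(assoc A k s w) ksw addr0 sk (amul1l A) => /eqP.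
by rewrite subr_eq0 => /eqP <-.
Qed.

Lemma central_inv s : mul k s = one -> mul s k = one -> central A s.
Proof.
move=> ks sk.
have k_sx x : mul k (mul s x) = x by rewrite -central_mulAl ks (amul1l A).
have k_xs x : mul k (mul x s) = x.
  by rewrite -central_mulAl central_mulC central_mulAm ks (amul1r A).
move=> a b; split.
- apply/eqP; rewrite subr_eq0; apply/eqP.
  rewrite -(central_invKl (mul (mul s a) b) sk) -(central_invKl (mul s (mul a b)) sk).
  by rewrite -central_mulAl !k_sx.
- by rewrite -(central_invKl (mul s a) sk) -(central_invKl (mul a s) sk) k_sx k_xs.
Qed.

Lemma central_inv_conj s : cj k = k -> mul k s = one -> mul s k = one -> cj s = s.
Proof.
move=> cjk ks sk.
have k_cjs : mul k (cj s) = one by rewrite -cjk -aconjM sk aconj1.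
by rewrite -(central_invKl (cj s) sk) k_cjs (amul1r A).
Qed.

End Central.

Lemma central_unscale t c : t != 0 -> central A (t *: c) -> central A c.
Proof.
move=> t0 ctc a b; have [tc_assoc tcC] := ctc a b; split.
- by move: tc_assoc; rewrite /assoc !amulZl -scalerBr => /eqP; rewrite scaler_eq0 (negbTE t0) => /eqP.
- by apply: (scalerI t0); rewrite -amulZl tcC amulZr.
Qed.

Lemma invertible_unscale t c : t != 0 -> invertible A (t *: c) -> invertible A c.
Proof.
move=> t0 [s [tcs stc]]; exists (t *: s).
by split; [rewrite amulZr -amulZl | rewrite amulZl -amulZr].
Qed.

Lemma nrmZ t x : nrm A (t *: x) = (t * t) *: nrm A x.
Proof. by rewrite /nrm aconjZ amulZl amulZr scalerA. Qed.

Lemma invertible_central_nrmZ t x : t != 0 ->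
  invertible_central A (nrm A (t *: x)) -> invertible_central A (nrm A x).
Proof.
move=> t0; have tt0 : t * t != 0 by rewrite mulf_neq0.
by rewrite nrmZ => -[/(central_unscale tt0) ? /(invertible_unscale tt0)].
Qed.

Lemma nrm_conj_eq f : invertible_central A (nrm A f) -> invertible_central A (nrm A (cj f)) ->
  nrm A (cj f) = nrm A f.
Proof.
rewrite /nrm aconjK; set c := mul f (cj f); set c' := mul (cj f) f.
move=> [cc _] [cc' [s' [_ s'c']]].
have f_diff : mul f (c' - c) = 0.
  by rewrite (amulDr A) amulNr /c' -(alt_flexible altA) -/c central_mulC // subrr.
have cjf_f_diff : mul (cj f) (mul f (c' - c)) = mul c' (c' - c).
  by rewrite !(amulDr A) !amulNr -(central_mulAr cc') -(central_mulAr cc).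
apply/eqP; rewrite -subr_eq0; apply/eqP.
by rewrite -(central_invKl cc' (c' - c) s'c') -cjf_f_diff f_diff !amul0r.
Qed.

(* With c = f2 f2^c central and invertible, I := - f1 (c^-1 f2^c) is an
   imaginary unit solving f1 + I f2 = 0. *)
Lemma sphere_root f1 f2 : cnorm_eq (f1, f2) 0 0 ->
  invertible_central A (nrm A f2) -> invertible_central A (nrm A (cj f2)) ->
  exists2 I, sphere A I & f1 + mul I f2 = 0.
Proof.
move=> [XXc XcX] nrm_f2 nrm_cjf2; have := nrm_conj_eq nrm_f2 nrm_cjf2.
case: nrm_f2 => cc [s [cs sc]]; rewrite /nrm aconjK in cc cs sc *.
set c := mul f2 (cj f2) in cc cs sc * => c'c.
move: XXc XcX; rewrite /cmul rl0 /= => -[/eqP e1 e2] [/eqP e3 _].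
move: e1 e3; rewrite !subr_eq0 c'c => /eqP f1f1c /eqP f1cf1.
have sC := central_inv cc cs sc.
have cjs : cj s = s by apply: (central_inv_conj cc) => //; rewrite /c aconjM aconjK.
set u := mul s (cj f2).
have f2u : mul f2 u = one by rewrite /u (central_mulCA sC) -/c sc.
have uf2 : mul u f2 = one by rewrite /u (central_mulAl sC) c'c sc.
have cju : cj u = mul s f2 by rewrite aconjM aconjK cjs -(central_mulC sC).
exists (- mul f1 u); last by rewrite amulNl (alt_invKr altA uf2 f2u) subrr.
split.
- rewrite /tr aconjN aconjM cju /u (central_mulCA sC) (central_mulAl sC) -opprD.
  by rewrite -(amulDr A) e2 amul0r oppr0.
- rewrite /nrm aconjN aconjM cju amulNl amulNr opprK /u (central_mulCA sC) (central_mulAl sC).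
  have f1_inv : mul f1 (mul s (cj f1)) = one by rewrite (central_mulCA sC) f1f1c sc.
  have inv_f1 : mul (mul s (cj f1)) f1 = one by rewrite (central_mulAl sC) f1cf1 sc.
  have cjf2_inv : mul (cj f2) (mul s f2) = one by rewrite (central_mulCA sC) c'c sc.
  have inv_cjf2 : mul (mul s f2) (cj f2) = one by rewrite (central_mulAl sC) -/c sc.
  have := alt_mul_units_inv altA f1_inv inv_f1 cjf2_inv inv_cjf2.
  by rewrite !(central_mulCA sC) (central_mulAl sC).
Qed.

(** * Zeros of slice functions *)

Lemma imx_slice_pt a b J : sphere A J -> imx A (rl a + b *: J) = b *: J.
Proof.
move=> sJ; rewrite /imx tr_slice_pt // /rl scalerA.
have -> : 2%:R^-1 * (a + a) = a by field.
by rewrite addrAC subrr add0r.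
Qed.

Lemma ainv_sphereZ b J : sphere A J -> b != 0 -> ainv A (b *: J) = - b^-1 *: J.
Proof.
move=> sJ b0; rewrite /ainv; set S := (X in xget _ X).
have mulZJ c d : mul (c *: J) (d *: J) = (- (c * d)) *: one.
  by rewrite amulZl amulZr scalerA sphere_sqr // scalerN -scaleNr.
have : S (xget 0 S).
  apply: (@xgetI _ _ S (- b^-1 *: J)).
  by split; rewrite mulZJ ?mulrN ?mulNr opprK ?mulfV ?mulVf // scale1r.
move: (xget 0 S) => y [bJy _].
have := congr1 (mul J) bJy; rewrite amulZl amulZr sphere_mulK // (amul1r A) => <-.
by rewrite scalerA mulNr mulVf // scaleN1r opprK.
Qed.

Section Zeros.
Variable D : R -> R -> Prop.

Lemma sderiv_slice_pt (F : stem V) a b J : is_stem D F -> D a b -> sphere A J ->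
  b != 0 -> sderiv A D F (rl a + b *: J) = b^-1 *: F.2 a b.
Proof.
move=> sF Dab sJ b0; rewrite /sderiv imx_slice_pt // ainv_sphereZ //.
have -> : cj (rl a + b *: J) = rl a + b *: (- J).
  by rewrite aconjD aconj_real aconjZ sphere_conj.
rewrite (slice_fun_pt sF Dab sJ) (slice_fun_pt sF Dab (sphereN sJ)).
rewrite amulNl opprD addrACA subrr add0r opprK.
rewrite -mulr2n amulMnr amulZl sphere_mulK // -scaler_nat !scalerA scalerN -scaleNr.
by congr (_ *: _); rewrite mulVf ?pnatr_eq0 // mul1r opprK.
Qed.

Lemma slice_values_eq J N1 N2 M1 M2 : sphere A J ->
  N1 + mul J N2 = M1 + mul J M2 -> N1 + mul (- J) N2 = M1 + mul (- J) M2 ->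
  N1 = M1 /\ N2 = M2.
Proof.
move=> sJ eJ eNJ.
have e1 : N1 = M1.
  apply: (@mulrn_inj R V 2) => //; move: eJ eNJ; rewrite !amulNl => eJ eNJ.
  have -> : (N1 - M1) *+ 2 =
    (N1 + mul J N2 - (M1 + mul J M2)) + (N1 - mul J N2 - (M1 - mul J M2)) by zmod_ring.
  by rewrite eJ eNJ !subrr addr0.
split => //; apply/eqP; rewrite -subr_eq0; apply/eqP; apply: (sphere_mul_eq0 sJ).
by rewrite (amulDr A) amulNr; apply/eqP; rewrite subr_eq0; apply/eqP; move: eJ; rewrite e1 => /addrI.
Qed.

Lemma tame_cnorm (F : stem V) a b J : tame A D F -> is_stem D F -> D a b -> sphere A J ->
  exists n1 n2, cnorm_eq (stem_at F a b) n1 n2.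
Proof.
move=> [NF_real NF_eq] sF Dab sJ.
have [[n1 e1] [n2 e2]] := NF_real a b Dab; exists n1, n2.
have inO I : sphere A I -> inOmega A D (rl a + b *: I) by move=> sI; exists a, b, I.
have sNF := is_stem_N sF; have sNFc := is_stem_N (is_stem_conj sF).
have := NF_eq _ (inO _ sJ); have := NF_eq _ (inO _ (sphereN sJ)).
have sNJ := sphereN sJ.
rewrite (slice_fun_pt sNF Dab sJ) (slice_fun_pt sNF Dab sNJ).
rewrite (slice_fun_pt sNFc Dab sJ) (slice_fun_pt sNFc Dab sNJ) => eNJ eJ.
have [e1' e2'] := slice_values_eq sJ eJ eNJ.
rewrite /cnorm_eq -e1 -e2 {2}e1' {2}e2' /=.
by rewrite !aconjK.
Qed.

Lemma cnorm0_of_mul_zero (F G : stem V) a b J : tame A D F -> tame A D G ->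
  is_stem D F -> is_stem D G -> D a b -> sphere A J ->
  slice_fun A D (stem_mul A F G) (rl a + b *: J) = 0 ->
  cnorm_eq (stem_at F a b) 0 0 \/ cnorm_eq (stem_at G a b) 0 0.
Proof.
move=> tF tG sF sG Dab sJ FG0.
have [n1 [n2 nF]] := tame_cnorm tF sF Dab sJ.
have [m1 [m2 nG]] := tame_cnorm tG sG Dab sJ.
rewrite (slice_fun_pt (is_stem_mul sF sG) Dab sJ) in FG0.
by case: (cnorm0_of_mul_slice0 sJ nF nG FG0) => -[? ?]; [left|right]; subst.
Qed.

Lemma zeroset_Nstem (F : stem V) a b J : is_stem D F -> D a b -> sphere A J ->
  cnorm_eq (stem_at F a b) 0 0 -> zeroset A D (Nstem A F) (rl a + b *: J).
Proof.
move=> sF Dab sJ [NF0 _]; split; first by exists a, b, J.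
rewrite (slice_fun_pt (is_stem_N sF) Dab sJ) /Nstem /stem_mul /=.
by move: NF0; rewrite rl0 => -[-> ->]; rewrite amul0r addr0.
Qed.

Lemma zeroset_on_sphere (F : stem V) a b J : nonsingular A ->
  is_stem D F -> D a b -> sphere A J ->
  (b != 0 -> C_A A (sderiv A D F (rl a + b *: J))) ->
  cnorm_eq (stem_at F a b) 0 0 ->
  exists y, zeroset A D F y /\ in_sph A y (rl a + b *: J).
Proof.
move=> ns sF Dab sJ CA N0.
suff [I sI FI0] : exists2 I, sphere A I & F.1 a b + mul I (F.2 a b) = 0.
  exists (rl a + b *: I); split; last by exists a, b, I, J.
  by split; [exists a, b, I | rewrite slice_fun_pt].
have F2_0 : F.2 a b = 0 -> exists2 I, sphere A I & F.1 a b + mul I (F.2 a b) = 0.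
  move=> F20; exists J; rewrite // F20 amul0r addr0; apply: ns.
  by case: N0 => -[]; rewrite F20 amul0l subr0 rl0.
have [b0|b0] := eqVneq b 0.
  by apply: F2_0; subst b; apply: stem_snd0 sF Dab.
move: (CA b0); rewrite sderiv_slice_pt // => -[|[nF2 ncF2]].
  by move/eqP; rewrite scaler_eq0 invr_eq0 (negbTE b0) => /eqP; apply: F2_0.
have b'0 : b^-1 != 0 by rewrite invr_eq0.
rewrite aconjZ in ncF2.
exact: sphere_root N0 (invertible_central_nrmZ b'0 nF2) (invertible_central_nrmZ b'0 ncF2).
Qed.

End Zeros.

End SliceFunctions.

Unset Implicit Arguments. Set Strict Implicit.

Theorem proposition5p3 (R : realType) (V : vectType R) (A : altStarAlg V)
  (D : R -> R -> Prop) (F G : stem V) :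
  (exists a b, D a b) ->
  (forall a b, D a b -> D a (- b)) ->
  (exists J, sphere A J) ->
  is_stem D F -> is_stem D G -> tame A D F -> tame A D G ->
  (forall x, zeroset A D (stem_mul A F G) x ->
     zeroset A D (Nstem A F) x \/ zeroset A D (Nstem A G) x) /\
  (nonsingular A ->
   (forall x, inOmega A D x -> ~ is_real A x ->
      C_A A (sderiv A D F x) /\ C_A A (sderiv A D G x)) ->
   forall x, zeroset A D (stem_mul A F G) x ->
     exists y, (zeroset A D F y \/ zeroset A D G y) /\ in_sph A y x).
Proof.
move=> _ _ _ sF sG tF tG.
have FG_zero x : zeroset A D (stem_mul A F G) x -> exists a b J,
    [/\ D a b, sphere A J, x = rl A a + b *: J &
        cnorm_eq A (stem_at F a b) 0 0 \/ cnorm_eq A (stem_at G a b) 0 0].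
  move=> [[a [b [J [Dab [sJ ->]]]]] FG0]; exists a, b, J.
  by split => //; apply: cnorm0_of_mul_zero tF tG sF sG Dab sJ FG0.
split=> [x /FG_zero [a [b [J [Dab sJ -> [N0|N0]]]]]|ns CA x /FG_zero [a [b [J [Dab sJ -> N0]]]]].
- by left; apply: zeroset_Nstem.
- by right; apply: zeroset_Nstem.
have CA_pt : b != 0 -> C_A A (sderiv A D F (rl A a + b *: J)) /\
                       C_A A (sderiv A D G (rl A a + b *: J)).
  move=> b0; apply: CA; first by exists a, b, J.
  by move/(slice_pt_real sJ)/eqP; rewrite (negbTE b0).
case: N0 => N0.
- have [y [Fy Sy]] := zeroset_on_sphere ns sF Dab sJ (fun b0 => (CA_pt b0).1) N0.
  by exists y; split; first left.
- have [y [Gy Sy]] := zeroset_on_sphere ns sG Dab sJ (fun b0 => (CA_pt b0).2) N0.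
  by exists y; split; first right.
Qed.
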